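(* Let $\mathbb{K}$ be a field of characteristic zero, let $u,v,t,w\in\mathbb{K}$ with $wt\neq0$, let $a_1,\dots,a_\ell\in\mathbb{K}$, and let $\alpha_1\le\dots\le\alpha_\ell$, $\beta_1,\dots,\beta_\ell$, $\gamma_1,\dots,\gamma_\ell$ be nonnegative integers. Let \[P=\sum_{j=1}^\ell a_jX^{\alpha_j}(vX+t)^{\beta_j}(uX+w)^{\gamma_j}.\] If $P\neq0$, then $\operatorname{val}(P)\le\max_{1\le j\le\ell}\left(\alpha_j+2\binom{\ell+1-j}{2}\right)$.
   Context: For a nonzero polynomial $P$, $\operatorname{val}(P)$ is the largest integer $v$ such that $X^v$ divides $P$. *)

From HB Require Import structures.
From mathcomp Require Import all_boot all_order all_algebra.
Set Implicit Arguments. Unset Strict Implicit. Unset Printing Implicit Defensive.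
Import Order.TTheory GRing.Theory Num.Theory.
Local Open Scope ring_scope.

(* val P : the largest v such that X^v divides P (meaningful for P != 0;
   any v with X^v %| P, P != 0, satisfies v < size P). *)
Definition valp (K : fieldType) (P : {poly K}) : nat :=
  (\max_(v < size P | (('X^v : {poly K}) %| P)%R) v)%N.

From HB Require Import structures.
From mathcomp Require Import all_boot all_order all_algebra perm ring zify.
Import Order.TTheory GRing.Theory Num.Theory.
Local Open Scope ring_scope.
Set Implicit Arguments. Unset Strict Implicit. Unset Printing Implicit Defensive.

(* With Y = X (vX+t)(uX+w), each term f satisfies Y f' = f Q with deg Q <= 2,
   hence f^(k) Y^k = f R_k with deg R_k <= 2k.  We induct on the number of
   terms.  If the Wronskian of the terms vanishes, they are linearly dependent
   (characteristic zero), so one coefficient can be cancelled; if a_0 = 0 the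
   first term is dropped.  Otherwise, replacing the first row of the Wronskian
   matrix by the derivatives of P and scaling column k by Y^k shows that
   X^val(P) divides a_0 f_0 det(R_k(Q_i)), a nonzero polynomial of degree
   <= 2 binom(l+1, 2); hence val(P) <= al_0 + 2 binom(l+1, 2). *)

Lemma dvdXnP (K : fieldType) (p : {poly K}) n :
  reflect (forall i, (i < n)%N -> p`_i = 0) ('X^n %| p).
Proof.
apply: (iffP idP) => [/dvdpP[q ->] i lt_in | p_low]; first by rewrite coefMXn lt_in.
apply/dvdpP; exists (drop_poly n p); rewrite -{1}(poly_take_drop n p).
suff -> : take_poly n p = 0 by rewrite add0r.
by apply/polyP => i; rewrite coef_take_poly coef0; case: ifP => // /p_low.
Qed.

Lemma dvdXn_derivn (K : fieldType) (p : {poly K}) n k :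
  'X^n %| p -> 'X^n %| p^`(k) * 'X^k.
Proof.
move=> /dvdXnP p_low; apply/dvdXnP => i lt_in.
rewrite coefMXn; case: ltnP => // le_ki.
by rewrite coef_derivn subnKC // p_low // mul0rn.
Qed.

Lemma dvdXn_size_bound (K : fieldType) N a (c D : {poly K}) :
  c.[0] != 0 -> D != 0 -> 'X^N %| 'X^a * (c * D) -> (N <= a + (size D).-1)%N.
Proof.
move=> c0 D_neq0; have [le_Na _ | lt_aN] := leqP N a; first exact: leq_trans (leq_addr _ _).
rewrite -(subnKC (ltnW lt_aN)) exprD dvdp_mul2l ?expf_neq0 ?polyX_eq0 //.
have coprime_c : coprimep ('X^(N - a)) c.
  apply: coprimep_expl; rewrite coprimep_sym -[X in coprimep _ X]subr0 -polyC0.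
  by rewrite coprimep_XsubC rootE.
rewrite mulrC Gauss_dvdpl // => /(dvdp_leq D_neq0).
rewrite size_polyXn leq_add2l => lt_size.
by rewrite -ltnS prednK // size_poly_gt0.
Qed.

Section DegreeBounds.
Variable R : comNzRingType.
Implicit Types p q : {poly R}.

Lemma size_natmul_le p n : (size (p *+ n) <= size p)%N.
Proof. by apply/leq_sizeP => j hj; rewrite coefMn nth_default // mul0rn. Qed.

Lemma size_mul_le p q m n :
  (size p <= m.+1)%N -> (size q <= n.+1)%N -> (size (p * q)%R <= (m + n).+1)%N.
Proof.
move=> hp hq; apply: leq_trans (size_polyMleq p q) _.
by rewrite -subn1 leq_subLR add1n -addSn -addnS leq_add.
Qed.

Lemma size_deriv_le p : (size p^`() <= (size p).-1)%N.
Proof. exact: size_poly. Qed.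

Lemma size_affine_le (c d : R) : (size (c%:P * 'X + d%:P)%R <= 2)%N.
Proof. by rewrite size_MXaddC; case: ifP => // _; rewrite ltnS size_polyC_leq1. Qed.

Lemma size_prod_le (I : finType) (F : I -> {poly R}) (d : I -> nat) :
  (forall i, size (F i) <= (d i).+1)%N -> (size (\prod_i F i)%R <= (\sum_i d i).+1)%N.
Proof.
move=> hF; elim/big_rec2: _ => [|i n p _ IH]; first by rewrite size_poly1.
have := size_polyMleq (F i) p; have := hF i; lia.
Qed.

(* If entry (i, k) of A has degree <= dk, then det A has degree
   <= d (0 + 1 + ... + (m-1)) = d binom(m, 2). *)
Lemma size_det_le m (A : 'M[{poly R}]_m) d :
  (forall i k : 'I_m, size (A i k) <= (d * k).+1)%N ->
  (size (\det A) <= (d * 'C(m, 2)).+1)%N.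
Proof.
move=> hA; apply: leq_trans (size_sum _ _ _) _; apply/bigmax_leqP => s _.
have -> : (d * 'C(m, 2) = \sum_i d * s i)%N.
  by rewrite -big_distrr /= -bin2_sum big_mkord (reindex_perm s).
by rewrite (@size_Msign _ (\prod_i A i (s i))); apply: size_prod_le => i; apply: hA.
Qed.

End DegreeBounds.

Lemma mul_deriv_exp (R : comNzRingType) (p : {poly R}) n :
  p * (p ^+ n)^`() = p^`() * p ^+ n *+ n.
Proof. by rewrite deriv_exp; case: n => [|n]; rewrite ?mulr0n ?mulr0 //= exprS; ring. Qed.

Section IteratedDerivatives.
Variable R : comNzRingType.
Variables Q Y : {poly R}.

(* The coefficients R_k with f^(k) Y^k = f R_k whenever Y f' = f Q. *)
Fixpoint derivn_coef (k : nat) : {poly R} :=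
  if k is k'.+1 then
    let r := derivn_coef k' in Q * r + Y * r^`() - Y^`() * r *+ k'
  else 1.

(* Induction on k: differentiate f^(k) Y^k = f R_k, multiply by Y, and use
   Y (Y^k)' = k Y' Y^k and Y f' = f Q. *)
Lemma derivn_of_ode (f : {poly R}) :
  Y * f^`() = f * Q -> forall k, f^`(k) * Y ^+ k = f * derivn_coef k.
Proof.
move=> f_ode; elim=> [|k IH]; first by rewrite derivn0 expr0 /= !mulr1.
have dIH := congr1 deriv IH; rewrite !derivM -derivnS in dIH.
set r := derivn_coef k in dIH *.
rewrite exprSr; transitivity ((f^`(k.+1) * Y ^+ k + f^`(k) * (Y ^+ k)^`()) * Y
                              - f^`(k) * (Y * (Y ^+ k)^`())); first by ring.
rewrite dIH mul_deriv_exp.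
transitivity (r * (Y * f^`()) + f * (Y * r^`()) - Y^`() * (f^`(k) * Y ^+ k) *+ k).
  by ring.
by rewrite f_ode IH /= -/r; ring.
Qed.

Lemma size_derivn_coef d :
  (size Q <= d.+1)%N -> (size Y <= d.+2)%N ->
  forall k, (size (derivn_coef k) <= (d * k).+1)%N.
Proof.
move=> hQ hY; elim=> [|k IH] /=; first by rewrite size_poly1.
set r := derivn_coef k in IH *; clearbody r.
have := size_polyMleq Q r; have := size_polyMleq Y r^`().
have := size_polyMleq Y^`() r; have := size_deriv_le r; have := size_deriv_le Y.
move=> hY' hr' hY'r hYr' hQr; rewrite mulnS; apply: leq_trans (size_polyD _ _) _.
rewrite size_polyN geq_max; apply/andP; split.
  apply: leq_trans (size_polyD _ _) _; rewrite geq_max; apply/andP; split; lia.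
apply: leq_trans (size_natmul_le _ _) _; lia.
Qed.

End IteratedDerivatives.

Lemma det_diag_row (R : comNzRingType) m (F : 'I_m -> R) :
  \det (diag_mx (\row_i F i)) = \prod_i F i.
Proof. by rewrite det_diag; apply: eq_bigr => i _; rewrite mxE. Qed.

Section Wronskian.
Variable R : comNzRingType.
Implicit Types g : nat -> {poly R}.

Definition wronskian_mx g m : 'M[{poly R}]_m := \matrix_(i < m, k < m) (g i)^`(k).

Definition wronskian g m : {poly R} := \det (wronskian_mx g m).

(* Replacing g_0 by sum_j a_j g_j multiplies the Wronskian by a_0: the new
   matrix is the old one multiplied on the left by a triangular matrix. *)
Lemma wronskian_replace_first g m (a : nat -> R) :
  wronskian (fun i => if i == 0%N then \sum_(j < m.+1) (a j)%:P * g j else g i) m.+1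
  = (a 0%N)%:P * wronskian g m.+1.
Proof.
pose T : 'M[{poly R}]_m.+1 :=
  \matrix_(i, j) (if i == ord0 then (a j)%:P else (i == j)%:R).
have detT : \det T = (a 0%N)%:P.
  rewrite -det_tr det_trig; last first.
    apply/is_trig_mxP => i j lt_ij; rewrite !mxE.
    have -> : (j == ord0) = false by apply/negbTE; apply: contraTneq lt_ij => ->.
    by case: eqP => // eq_ji; move: lt_ij; rewrite eq_ji ltnn.
  rewrite (bigD1 ord0) //= big1 => [|i ni0]; first by rewrite !mxE eqxx mulr1.
  by rewrite !mxE (negbTE ni0) eqxx.
rewrite /wronskian -detT -det_mulmx; congr (\det _); apply/matrixP => i k; rewrite !mxE.
have [-> | ni0] := eqVneq i ord0.
  rewrite raddf_sum; apply: eq_bigr => j _.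
  by rewrite !mxE eqxx /= !mul_polyC derivnZ.
have -> : (i == 0%N :> nat) = false by exact: negbTE ni0.
rewrite (bigD1 i) //= big1 => [|j nji]; rewrite !mxE (negbTE ni0).
  by rewrite eqxx mul1r addr0.
by rewrite eq_sym (negbTE nji) mul0r.
Qed.

Lemma wronskian_factor (Y : {poly R}) (Q : nat -> {poly R}) g m :
  (forall i, Y * (g i)^`() = g i * Q i) ->
  wronskian g m * \prod_(k < m) Y ^+ k =
  \prod_(i < m) g i * \det (\matrix_(i < m, k < m) derivn_coef (Q i) Y k).
Proof.
move=> g_ode; rewrite /wronskian -!det_diag_row -!det_mulmx; congr (\det _).
apply/matrixP => i k; rewrite mul_mx_diag mul_diag_mx !mxE.
exact: derivn_of_ode.
Qed.

End Wronskian.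

Lemma mulmx_det_neq0_eq0 (R : idomainType) m (A : 'M[R]_m) (x : 'rV[R]_m) :
  \det A != 0 -> x *m A = 0 -> x = 0.
Proof.
move=> detA xA; have := congr1 (mulmx^~ (\adj A)) xA.
rewrite /= -mulmxA mul_mx_adj mul0mx mul_mx_scalar => /eqP.
by rewrite scalemx_eq0 (negbTE detA) => /eqP.
Qed.

Section CharZero.
Variable K : fieldType.
Hypothesis charK : [pchar K] =i pred0.
Implicit Types p q : {poly K}.

Lemma natmul_neq0 (x : K) n : x != 0 -> n != 0%N -> x *+ n != 0.
Proof. by move=> x0 n0; rewrite -mulr_natr mulf_neq0 //; move/pcharf0P: charK => ->. Qed.

Lemma natmul_inj (x : K) a b : x != 0 -> x *+ a = x *+ b -> a = b.
Proof.
move=> x0; wlog le_ab : a b / (a <= b)%N.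
  by move=> H e; case: (leqP a b) => [|/ltnW] h; [exact: H | exact/esym/H].
move=> e; apply/eqP; rewrite eqn_leq le_ab -subn_eq0 /=.
apply/negPn/negP => nz; have := natmul_neq0 x0 nz.
by rewrite mulrnBr // e subrr eqxx.
Qed.

Lemma size_lead_deriv p :
  size p^`() = (size p).-1 /\ lead_coef p^`() = lead_coef p *+ (size p).-1.
Proof.
have [p_small | p_big] := leqP (size p) 1.
  have -> : (size p).-1 = 0%N by case: (size p) p_small => [|[]].
  have /size_poly_leq0P -> : (size p^`() <= 0)%N.
    by apply: leq_trans (size_deriv_le p) _; case: (size p) p_small => [|[]].
  by rewrite size_poly0 lead_coef0 mulr0n.
have sp1 : (0 < (size p).-1)%N by case: (size p) p_big => [|[]].
have lp0 : lead_coef p != 0 by rewrite lead_coef_eq0 -size_poly_gt0 ltnW.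
have size_d : size p^`() = (size p).-1.
  by rewrite /deriv size_poly_eq // prednK // natmul_neq0 // -?lt0n.
by split=> //; rewrite lead_coefE size_d coef_deriv prednK.
Qed.

(* If p' q = p q' with p, q nonzero, then p and q have the same degree:
   compare the leading coefficients of both sides. *)
Lemma size_eq_of_wronskian2 p q :
  p != 0 -> q != 0 -> p^`() * q = p * q^`() -> size p = size q.
Proof.
move=> p0 q0 e; have := congr1 lead_coef e; rewrite !lead_coefM.
have [_ ->] := size_lead_deriv p; have [_ ->] := size_lead_deriv q.
rewrite mulrnAl mulrnAr => /natmul_inj; rewrite mulf_neq0 ?lead_coef_eq0 // => /(_ isT).
by move=> e_pred; rewrite -[size p]prednK ?size_poly_gt0 // e_pred prednK // size_poly_gt0.
Qed.

(* Two polynomials with vanishing Wronskian are proportional: r = p - c q,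
   with c cancelling the top coefficient, satisfies the same equation but has
   smaller degree than q, so r = 0 by size_eq_of_wronskian2. *)
Lemma wronskian2_proportional p q :
  q != 0 -> p^`() * q = p * q^`() -> p = (lead_coef p / lead_coef q) *: q.
Proof.
move=> q0 e; have [-> | p0] := eqVneq p 0; first by rewrite lead_coef0 mul0r scale0r.
have lq0 : lead_coef q != 0 by rewrite lead_coef_eq0.
set r := p - (lead_coef p / lead_coef q) *: q.
have er : r^`() * q = r * q^`().
  by rewrite /r derivB derivZ mulrBl mulrBl e -!scalerAl [q^`() * q]mulrC.
apply/eqP; rewrite -subr_eq0 -/r; apply/negPn/negP => r0.
have top_r : r`_(size q).-1 = 0.
  rewrite /r coefB coefZ -lead_coefE -(size_eq_of_wronskian2 p0 q0 e) -lead_coefE.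
  by rewrite mulrVK ?subrr // unitfE.
move: top_r; rewrite -(size_eq_of_wronskian2 r0 q0 er) -lead_coefE => /eqP.
by rewrite lead_coef_eq0 (negbTE r0).
Qed.

End CharZero.

Section WronskianDependence.
Variable K : fieldType.
Hypothesis charK : [pchar K] =i pred0.
Variable g : nat -> {poly K}.

Local Notation C m i := (cofactor (wronskian_mx g m.+1) i ord_max).

Lemma wronskian_cofactor_last m : C m ord_max = wronskian g m.
Proof.
rewrite /cofactor addnn -signr_odd odd_double expr0 mul1r.
by congr (\det _); apply/matrixP => i k; rewrite !mxE !lift_max.
Qed.

(* When the Wronskian vanishes, the cofactor vector is orthogonal to every
   column: this is the last row of adj(W) W = det(W) 1. *)
Lemma sum_derivn_cofactor m k :
  wronskian g m.+1 = 0 -> (k <= m)%N -> \sum_(i < m.+1) (g i)^`(k) * C m i = 0.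
Proof.
move=> W0 le_km.
pose k' : 'I_m.+1 := Ordinal (le_km : (k < m.+1)%N).
have := congr1 (fun M : 'M_m.+1 => M ord_max k') (mul_adj_mx (wronskian_mx g m.+1)).
rewrite !mxE -[\det _]/(wronskian g m.+1) W0 mul0rn => adj_row.
by rewrite -[RHS]adj_row; apply: eq_bigr => i _; rewrite !mxE mulrC.
Qed.

(* Differentiating the relation of index k and subtracting that of index
   k + 1 leaves the derivatives of the cofactors. *)
Lemma sum_derivn_cofactor_deriv m k :
  wronskian g m.+1 = 0 -> (k < m)%N -> \sum_(i < m.+1) (g i)^`(k) * (C m i)^`() = 0.
Proof.
move=> W0 lt_km; have := congr1 deriv (sum_derivn_cofactor W0 (ltnW lt_km)).
rewrite deriv0 raddf_sum /=; under eq_bigr do rewrite derivM -derivnS.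
by rewrite big_split /= (sum_derivn_cofactor W0 lt_km) add0r.
Qed.

(* If W(g_0..g_m) = 0 but W(g_0..g_(m-1)) != 0, all the cofactors C_i are
   proportional to C_m: the vector (C_i' C_m - C_i C_m')_(i<m) is killed by
   the Wronskian matrix of g_0..g_(m-1), hence vanishes. *)
Lemma cofactor_proportional m :
  wronskian g m.+1 = 0 -> wronskian g m != 0 ->
  forall i, C m i = (lead_coef (C m i) / lead_coef (C m ord_max)) *: C m ord_max.
Proof.
move=> W0 Wm0.
pose D i := (C m i)^`() * C m ord_max - C m i * (C m ord_max)^`().
have D_rel (k : 'I_m) : \sum_(i < m.+1) (g i)^`(k) * D i = 0.
  transitivity (C m ord_max * \sum_(i < m.+1) (g i)^`(k) * (C m i)^`()
                - (C m ord_max)^`() * \sum_(i < m.+1) (g i)^`(k) * C m i).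
    by rewrite !big_distrr -sumrB; apply: eq_bigr => i _ /=; rewrite /D; ring.
  by rewrite sum_derivn_cofactor_deriv // sum_derivn_cofactor 1?ltnW // !mulr0 subr0.
have D_max : D ord_max = 0 by rewrite /D mulrC subrr.
have D_low : \row_(i < m) D (widen_ord (leqnSn m) i) = 0.
  apply: (mulmx_det_neq0_eq0 Wm0); apply/matrixP => z k; rewrite !mxE.
  rewrite -[RHS](D_rel k) big_ord_recr /= D_max mulr0 addr0.
  by apply: eq_bigr => i _; rewrite !mxE mulrC.
move=> i; apply: wronskian2_proportional => //; first by rewrite wronskian_cofactor_last.
apply/eqP; rewrite -subr_eq0; apply/eqP; case: (unliftP ord_max i) => [j -> | ->] //.
have -> : lift ord_max j = widen_ord (leqnSn m) j by apply: ord_inj; rewrite lift_max.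
by have := congr1 (fun v : 'rV_m => v 0 j) D_low; rewrite !mxE.
Qed.

(* By induction on m: if the Wronskian
   of g_0..g_(m-1) already vanishes, extend its relation by zero; otherwise
   the cofactors are C_i = c_i C_m with C_m != 0, and the relation
   sum_i g_i C_i = 0 (k = 0) divided by C_m gives sum_i c_i g_i = 0. *)
Lemma wronskian_eq0_dependent m :
  wronskian g m = 0 ->
  exists c : nat -> K, (exists2 r, (r < m)%N & c r != 0) /\ \sum_(i < m) (c i)%:P * g i = 0.
Proof.
elim: m => [|m IH] W0.
  by move: W0; rewrite /wronskian det_mx00 => /eqP; rewrite oner_eq0.
have [Wm0 | Wm0] := eqVneq (wronskian g m) 0.
  have [c [[r lt_rm cr0] rel]] := IH Wm0.
  exists (fun i => if (i < m)%N then c i else 0); split.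
    by exists r; [apply: leqW | rewrite lt_rm].
  rewrite big_ord_recr /= ltnn mul0r addr0 -[RHS]rel; apply: eq_bigr => i _.
  by rewrite ltn_ord.
have Cm0 : C m ord_max != 0 by rewrite wronskian_cofactor_last.
have propC := cofactor_proportional W0 Wm0.
exists (fun i => lead_coef (C m (inord i)) / lead_coef (C m ord_max)); split.
  exists m => //; have -> : inord m = ord_max :> 'I_m.+1 by apply: val_inj; rewrite /= inordK.
  by rewrite divff ?oner_eq0 // lead_coef_eq0.
apply/eqP; rewrite -(mulIr_eq0 _ (mulIf Cm0)); apply/eqP.
rewrite mulr_suml -[RHS](sum_derivn_cofactor (k := 0) W0) //; apply: eq_bigr => i _.
by rewrite derivn0 inord_val [in RHS](propC i) -mul_polyC; ring.
Qed.

End WronskianDependence.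

Lemma dvdp_det_rows (K : fieldType) m (A : 'M[{poly K}]_m) (d : 'I_m -> {poly K}) :
  (forall i k, d i %| A i k) -> \prod_i d i %| \det A.
Proof.
move=> dA; have -> : A = diag_mx (\row_i d i) *m \matrix_(i, k) (A i k %/ d i).
  by apply/matrixP => i k; rewrite mul_diag_mx !mxE mulrC divpK.
rewrite det_mulmx det_diag; apply: dvdp_mulr.
by under [X in _ %| X]eq_bigr do rewrite mxE.
Qed.

Lemma sum_sub_relation (K : fieldType) n (a c : nat -> K) (g : nat -> {poly K}) (k : K) :
  \sum_(i < n) (c i)%:P * g i = 0 ->
  \sum_(i < n) (a i - k * c i)%:P * g i = \sum_(i < n) (a i)%:P * g i.
Proof.
move=> rel; under eq_bigr do rewrite polyCB polyCM mulrBl -mulrA.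
by rewrite sumrB -big_distrr /= rel mulr0 subr0.
Qed.

(* Valuation of a combination P = sum_j a_j g_j of solutions of Y g_i' = g_i Q_i
   with X | Y: replace g_0 by P in the Wronskian matrix and scale column k by
   Y^k.  Row 0 becomes divisible by X^val(P) and row i >= 1 by g_i, while the
   determinant is a_0 prod_i g_i det(R_k(Q_i)). *)
Lemma wronskian_valuation_dvd (K : fieldType) (Y Z : {poly K}) (Q g : nat -> {poly K})
    l (a : nat -> K) N :
  Y = 'X * Z -> (forall i, Y * (g i)^`() = g i * Q i) ->
  'X^N %| \sum_(j < l.+1) (a j)%:P * g j ->
  'X^N * \prod_(i < l.+1 | i != ord0) g i %|
    (a 0%N)%:P * (\prod_(i < l.+1) g i *
                  \det (\matrix_(i < l.+1, k < l.+1) derivn_coef (Q i) Y k)).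
Proof.
move=> eY g_ode dvdP.
pose d (i : 'I_l.+1) := if i == ord0 then 'X^N else g i.
have -> : 'X^N * \prod_(i < l.+1 | i != ord0) g i = \prod_i d i.
  rewrite [RHS](bigD1 ord0) //= /d eqxx; congr (_ * _).
  by apply: eq_bigr => i /negbTE ->.
rewrite -(wronskian_factor _ g_ode) mulrA -wronskian_replace_first /wronskian.
rewrite -[\prod_(k < l.+1) Y ^+ k]det_diag_row -det_mulmx; apply: dvdp_det_rows => i k; rewrite mul_mx_diag !mxE /d.
have [-> | ni0] := eqVneq i ord0.
  by rewrite eY exprMn mulrA dvdp_mulr // dvdXn_derivn.
have -> : (i == 0%N :> nat) = false by exact: negbTE ni0.
by rewrite (derivn_of_ode (g_ode i)) dvdp_mulIl.
Qed.

Section Terms.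
Variable K : fieldType.
Variables u v t w : K.

Local Notation A := (v%:P * 'X + t%:P).
Local Notation B := (u%:P * 'X + w%:P).

Definition term al be ga : {poly K} := 'X^al * A ^+ be * B ^+ ga.

Definition Ycoef : {poly K} := 'X * (A * B).

Definition Qcoef al be ga : {poly K} :=
  A * B *+ al + v%:P * 'X * B *+ be + u%:P * 'X * A *+ ga.

(* Each term satisfies Y f' = f Q: the logarithmic derivative of f is
   al/X + be v/(vX + t) + ga u/(uX + w). *)
Lemma deriv_affine (c d : K) : (c%:P * 'X + d%:P)^`() = c%:P.
Proof. by rewrite derivMXaddC derivC mul0r addr0. Qed.

Lemma term_ode al be ga : Ycoef * (term al be ga)^`() = term al be ga * Qcoef al be ga.
Proof.
rewrite /term /Ycoef /Qcoef !derivM.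
transitivity (('X * ('X^al)^`()) * A ^+ be * B ^+ ga * (A * B)
              + (A * (A ^+ be)^`()) * 'X^al * B ^+ ga * ('X * B)
              + (B * (B ^+ ga)^`()) * 'X^al * A ^+ be * ('X * A)); first by ring.
by rewrite !mul_deriv_exp derivX !deriv_affine; ring.
Qed.

Lemma size_Ycoef : (size Ycoef <= 4)%N.
Proof.
apply: (@size_mul_le _ _ _ 1 2); first by rewrite size_polyX.
exact: (@size_mul_le _ _ _ 1 1) (size_affine_le _ _) (size_affine_le _ _).
Qed.

Lemma size_Qcoef al be ga : (size (Qcoef al be ga) <= 3)%N.
Proof.
have size_cX (c : K) : (size (c%:P * 'X)%R <= 2)%N.
  by apply: (@size_mul_le _ _ _ 0 1); rewrite ?size_polyC_leq1 ?size_polyX.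
have size_AB : (size (A * B)%R <= 3)%N.
  exact: (@size_mul_le _ _ _ 1 1) (size_affine_le _ _) (size_affine_le _ _).
have size_cXB (c : K) : (size (c%:P * 'X * B)%R <= 3)%N.
  exact: (@size_mul_le _ _ _ 1 1) (size_cX c) (size_affine_le _ _).
have size_cXA (c : K) : (size (c%:P * 'X * A)%R <= 3)%N.
  exact: (@size_mul_le _ _ _ 1 1) (size_cX c) (size_affine_le _ _).
rewrite /Qcoef; apply: leq_trans (size_polyD _ _) _; rewrite geq_max; apply/andP; split.
  apply: leq_trans (size_polyD _ _) _; rewrite geq_max; apply/andP; split.
    exact: leq_trans (size_natmul_le _ _) size_AB.
  exact: leq_trans (size_natmul_le _ _) (size_cXB _).
exact: leq_trans (size_natmul_le _ _) (size_cXA _).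
Qed.

Lemma affine_horner0 (c d : K) : (c%:P * 'X + d%:P).[0] = d.
Proof. by rewrite hornerMXaddC hornerC mulr0 add0r. Qed.

Lemma affine_neq0 (c d : K) : d != 0 -> c%:P * 'X + d%:P != 0.
Proof. by apply: contraNneq => e; rewrite -(affine_horner0 c d) e horner0. Qed.

Section NonzeroConstants.
Hypotheses (t0 : t != 0) (w0 : w != 0).

Lemma term_neq0 al be ga : term al be ga != 0.
Proof. by rewrite /term !mulf_neq0 ?expf_neq0 ?polyX_eq0 ?affine_neq0. Qed.

Lemma Ycoef_neq0 : Ycoef != 0.
Proof. by rewrite /Ycoef !mulf_neq0 ?polyX_eq0 ?affine_neq0. Qed.

(* Main estimate, when the Wronskian does not vanish and a_0 != 0: X^N then
   divides X^(al_0) c det(R_k(Q_i)), where c(0) = a_0 t^be_0 w^ga_0 != 0 and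
   the determinant is nonzero of degree <= 2 binom(l+1, 2). *)
Lemma valuation_bound_wronskian l (a : nat -> K) (al be ga : nat -> nat) N :
  a 0%N != 0 -> wronskian (fun i => term (al i) (be i) (ga i)) l.+1 != 0 ->
  'X^N %| \sum_(i < l.+1) (a i)%:P * term (al i) (be i) (ga i) ->
  (N <= al 0%N + 2 * 'C(l.+1, 2))%N.
Proof.
move=> a0 W0 dvdP.
pose f i := term (al i) (be i) (ga i); pose D := \det (\matrix_(i < l.+1, k < l.+1)
  derivn_coef (Qcoef (al i) (be i) (ga i)) Ycoef k).
have factor : wronskian f l.+1 * \prod_(k < l.+1) Ycoef ^+ k = \prod_(i < l.+1) f i * D.
  exact: wronskian_factor (fun i => term_ode (al i) (be i) (ga i)).
have D0 : D != 0.
  have Yk0 : \prod_(k < l.+1) Ycoef ^+ k != 0.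
    by apply/prodf_neq0 => k _; rewrite expf_neq0 ?Ycoef_neq0.
  apply: contra_neq W0 => D_eq0; apply: (mulIf Yk0).
  by rewrite mul0r factor D_eq0 mulr0.
have size_D : (size D <= (2 * 'C(l.+1, 2)).+1)%N.
  apply: size_det_le => i k; rewrite mxE.
  exact: size_derivn_coef (size_Qcoef _ _ _) size_Ycoef k.
have nz_f : \prod_(i < l.+1 | i != ord0) f i != 0.
  by apply/prodf_neq0 => i _; apply: term_neq0.
pose c := (a 0%N)%:P * (A ^+ be 0%N * B ^+ ga 0%N).
have c0 : c.[0] != 0.
  by rewrite hornerM hornerC hornerM !horner_exp !affine_horner0 !mulf_neq0 ?expf_neq0.
have := wronskian_valuation_dvd (Y := Ycoef) (Z := A * B) erefl
  (fun i => term_ode (al i) (be i) (ga i)) dvdP.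
have -> : (a 0%N)%:P * (\prod_(i < l.+1) f i * D) =
          \prod_(i < l.+1 | i != ord0) f i * ('X^(al 0%N) * (c * D)).
  by rewrite (bigD1 ord0) //= /f /term /c; ring.
rewrite [X in X %| _]mulrC dvdp_mul2l // => /(dvdXn_size_bound c0 D0).
by move/leq_trans; apply; rewrite leq_add2l -subn1 leq_subLR add1n.
Qed.

Local Notation Psum l a al be ga :=
  (\sum_(i < l) (a i)%:P * term (al i) (be i) (ga i)).

Lemma Psum_drop l (a : nat -> K) (al be ga : nat -> nat) (r : 'I_l.+1) :
  a r = 0 ->
  Psum l.+1 a al be ga =
  Psum l (a \o bump r) (al \o bump r) (be \o bump r) (ga \o bump r).
Proof. by move=> ar0; rewrite (bigD1_ord r) //= ar0 mul0r add0r. Qed.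

(* The bound for the reindexed family implies the bound for the original:
   index i moves to bump r i >= i, which is at most i + 1. *)
Lemma bound_drop l (r : 'I_l.+1) (al : nat -> nat) N :
  (exists2 i, (i < l)%N & (N <= al (bump r i) + 2 * 'C(l - i, 2))%N) ->
  exists2 i, (i < l.+1)%N & (N <= al i + 2 * 'C(l.+1 - i, 2))%N.
Proof.
case=> i lt_il le_N; exists (bump r i); first by rewrite /bump; case: (r <= i)%N; lia.
apply: leq_trans le_N _; rewrite leq_add2l leq_mul2l leq_bin2l ?orbT //.
by rewrite /bump; case: (r <= i)%N; lia.
Qed.

Hypothesis charK : [pchar K] =i pred0.

(* Induction on the number of terms: either the Wronskian vanishes and a
   linear relation lets us cancel one coefficient, or a_0 = 0 and the first
   term can be dropped, or valuation_bound_wronskian applies to i = 0. *)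
Lemma valuation_bound l (a : nat -> K) (al be ga : nat -> nat) N :
  Psum l a al be ga != 0 -> 'X^N %| Psum l a al be ga ->
  exists2 i, (i < l)%N & (N <= al i + 2 * 'C(l - i, 2))%N.
Proof.
elim: l a al be ga => [|l IH] a al be ga P0 dvdP; first by rewrite big_ord0 eqxx in P0.
have drop (b : nat -> K) (r : 'I_l.+1) :
    b r = 0 -> Psum l.+1 b al be ga = Psum l.+1 a al be ga ->
    exists2 i, (i < l.+1)%N & (N <= al i + 2 * 'C(l.+1 - i, 2))%N.
  move=> br0 eq_ba; apply: (bound_drop (r := r)).
  apply: (IH (b \o bump r) (al \o bump r) (be \o bump r) (ga \o bump r));
    by rewrite -Psum_drop // eq_ba.
have [W0 | W0] := eqVneq (wronskian (fun i => term (al i) (be i) (ga i)) l.+1) 0.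
  have [c [[r lt_rl cr0] rel]] := wronskian_eq0_dependent charK W0.
  apply: (drop (fun i => a i - a r / c r * c i) (Ordinal lt_rl)).
    by rewrite /= divfK // subrr.
  exact: (sum_sub_relation (g := fun i => term (al i) (be i) (ga i)) a _ rel).
have [a00 | a00] := eqVneq (a 0%N) 0; first exact: (drop a ord0).
by exists 0%N => //; rewrite subn0; apply: valuation_bound_wronskian a00 W0 dvdP.
Qed.

End NonzeroConstants.
End Terms.

(* Indices j = 1..l of the paper are i = j-1 = 0..l-1 here, so
   binom(l+1-j, 2) becomes 'C(l - i, 2).  Every N with X^N | P is bounded by
   some alpha_i + 2 binom(l - i, 2) (valuation_bound). *)
Theorem corollary2p7 (K : fieldType) (charK : [pchar K] =i pred0)
  (u v t w : K) (hwt : w * t != 0) (l : nat) (a : nat -> K)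
  (alpha beta gamma : nat -> nat)
  (halpha : forall i j : nat, (i <= j)%N -> (j < l)%N -> (alpha i <= alpha j)%N) :
  let P : {poly K} :=
    \sum_(i < l) (a i)%:P * ('X^(alpha i) * ((v%:P * 'X + t%:P) ^+ beta i)
                                        * ((u%:P * 'X + w%:P) ^+ gamma i)) in
  P != 0 ->
  (valp P <= \max_(i < l) (alpha i + 2 * 'C(l - i, 2)))%N.
Proof.
move=> P P0; have w0 : w != 0 by apply: contraNneq hwt => ->; rewrite mul0r.
have t0 : t != 0 by apply: contraNneq hwt => ->; rewrite mulr0.
rewrite /valp; apply/bigmax_leqP => N dvdP.
have [i lt_il le_N] := valuation_bound t0 w0 charK P0 dvdP.
exact: leq_trans le_N (leq_bigmax_cond (Ordinal lt_il) isT).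
Qed.
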